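(* Let $k,\ell$ be non-negative integers with $\ell<2k$. Let $D$ be an orientation of a $(k,\ell)$-sparse loopless multigraph $H=(V,F)$ in which every vertex has indegree at most $k$, and let $u,v\in V$ be distinct with $\varrho_D(u)+\varrho_D(v)=2k-\ell$. Let $S=\{w\in V\setminus\{u,v\}:\varrho_D(w)<k\}$, and let $T$ be the set of vertices of $V$ not reachable by a directed path in $D$ from any vertex of $S$. Then there exists a $(k,\ell)$-component of $H$ containing both $u$ and $v$ if and only if $u,v\in T$; and if such a component exists, it is exactly $T$.
   Context: For $X\subseteq V$, $i_H(X)$ is the number of edges of $H$ with both endpoints in $X$. $H$ is $(k,\ell)$-sparse if $i_H(X)\le\max\{k|X|-\ell,0\}$ for every $X\subseteq V$. A $(k,\ell)$-block of $H$ is a set $X\subseteq V$ with $i_H(X)=\max\{k|X|-\ell,0\}$; a $(k,\ell)$-component is an inclusion-wise maximal $(k,\ell)$-block. $\varrho_D(w)$ is the indegree of $w$ in $D$; every vertex of $S$ is considered reachable from $S$. *)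

From mathcomp Require Import all_boot.
Set Implicit Arguments. Unset Strict Implicit. Unset Printing Implicit Defensive.

(* A directed multigraph D on vertex set V with edge set E: edge e goes from
   tl e to hd e.  The underlying undirected multigraph is H; D is an
   orientation of H. *)
Section Graph.
Variables (V E : finType) (tl hd : E -> V).

Definition loopless : Prop := forall e : E, tl e != hd e.

Definition ind (X : {set V}) : nat := #|[set e : E | (tl e \in X) && (hd e \in X)]|.

Definition indeg (w : V) : nat := #|[set e : E | hd e == w]|.

(* truncated nat subtraction: k*|X| - l = max{k|X| - l, 0} *)
Definition sparse (k l : nat) : Prop :=
  forall X : {set V}, ind X <= k * #|X| - l.

Definition block (k l : nat) (X : {set V}) : Prop := ind X = k * #|X| - l.

Definition component (k l : nat) (X : {set V}) : Prop :=
  block k l X /\ forall Y : {set V}, block k l Y -> X \subset Y -> Y = X.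

Definition arc : rel V := fun x y => [exists e : E, (tl e == x) && (hd e == y)].

(* vertices reachable by a directed path from some vertex of S
   (connect is reflexive, so every vertex of S is reachable) *)
Definition reachable_from (S : {set V}) (w : V) : bool :=
  [exists s in S, connect arc s w].
End Graph.

(* For a vertex set X containing u and v, i(X) is at most the number of arcs
   with head in X, i.e. the sum of the indegrees over X, which is at most
   rho(u) + rho(v) + k(|X| - 2) = k|X| - l.  Hence such an X is a block iff no
   arc enters X from outside and every w in X other than u, v has indegree k,
   i.e. X avoids S.  A set that no arc enters and that avoids S contains no
   vertex reachable from S, so it lies in T; conversely, if u, v lie in T, then
   T is such a set, hence a block, hence the unique component through u and v. *)

From mathcomp Require Import all_boot zify.
Set Implicit Arguments. Unset Strict Implicit. Unset Printing Implicit Defensive.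

Section InClosed.
Variables (V E : finType) (tl hd : E -> V).

Definition in_closed (X : {set V}) : bool :=
  [forall e, (hd e \in X) ==> (tl e \in X)].

Lemma in_closedP (X : {set V}) :
  reflect (forall e, hd e \in X -> tl e \in X) (in_closed X).
Proof. by apply: (iffP forallP) => Xc e; [apply/implyP: (Xc e) | apply/implyP/Xc]. Qed.

Lemma card_hd_in (X : {set V}) :
  #|[set e | hd e \in X]| = \sum_(w in X) indeg hd w.
Proof.
rewrite -sum1_card (partition_big hd [in X]) => [|e]; last by rewrite inE.
apply: eq_bigr => w wX; rewrite /indeg -sum1_card; apply: eq_bigl => e.
by rewrite !inE; case: eqP => [->|]; rewrite ?wX ?andbF.
Qed.

Lemma ind_leqif_sum_indeg (X : {set V}) :
  ind tl hd X <= \sum_(w in X) indeg hd w ?= iff in_closed X.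
Proof.
rewrite -card_hd_in.
have /subset_leqif_cards indX : [set e | (tl e \in X) && (hd e \in X)]
                                \subset [set e | hd e \in X].
  by apply/subsetP => e; rewrite !inE => /andP[].
congr (_ <= _ ?= iff _): indX; apply/eqP/in_closedP => [Xeq e hX | Xc].
  have : e \in [set e | hd e \in X] by rewrite inE.
  by rewrite -Xeq inE => /andP[].
by apply/setP => e; rewrite !inE; case hX: (hd e \in X); rewrite ?andbF ?Xc.
Qed.

Lemma in_closed_connect (X : {set V}) x y :
  in_closed X -> connect (arc tl hd) x y -> y \in X -> x \in X.
Proof.
move=> /in_closedP Xc /connectP[p]; elim: p x => [|z p IHp] x /=; first by move=> _ ->.
case/andP=> /existsP[e /andP[/eqP <- /eqP hd_e]] zp yz yX.
by apply: Xc; rewrite hd_e (IHp z).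
Qed.

Lemma in_closed_unreachable (S : {set V}) :
  in_closed [set w | ~~ reachable_from tl hd S w].
Proof.
apply/in_closedP => e; rewrite !inE; apply: contraNN => /existsP[s /andP[sS s_tl]].
apply/existsP; exists s; rewrite sS (connect_trans s_tl) // connect1 //.
by apply/existsP; exists e; rewrite !eqxx.
Qed.

End InClosed.

Section BlocksThroughUV.
Variables (V E : finType) (tl hd : E -> V) (k l : nat) (u v : V).
Hypotheses (l_lt_2k : l < 2 * k) (indeg_le : forall w, indeg hd w <= k)
  (u_neq_v : u != v) (indeg_uv : indeg hd u + indeg hd v = 2 * k - l).

Lemma sum_indeg_leqif (X : {set V}) : u \in X -> v \in X ->
  \sum_(w in X) indeg hd w <= k * #|X| - l
    ?= iff [forall w in X :\ u :\ v, indeg hd w == k].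
Proof.
move=> uX vX.
have vXu : v \in X :\ u by rewrite !inE eq_sym u_neq_v.
have cardX : #|X| = #|X :\ u :\ v| + 2.
  by rewrite (cardsD1 u X) (cardsD1 v (X :\ u)) uX vXu; lia.
have -> : k * #|X| - l = (2 * k - l) + \sum_(w in X :\ u :\ v) k.
  by rewrite sum_nat_const cardX; lia.
rewrite (big_setD1 u uX) (big_setD1 v vXu) /= addnA indeg_uv.
rewrite -[[forall _ in _, _]]andTb; apply: leqif_add; first exact/leqif_refl.
exact: leqif_sum (fun w _ => leqif_eq (indeg_le w)).
Qed.

Lemma blockE (X : {set V}) : u \in X -> v \in X ->
  block tl hd k l X <->
  in_closed tl hd X /\ {in X :\ u :\ v, forall w, indeg hd w = k}.
Proof.
move=> uX vX; rewrite /block.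
have [_ eqE] := leqif_trans (ind_leqif_sum_indeg tl hd X) (sum_indeg_leqif uX vX).
split=> [/eqP | [Xc Xk]].
  by rewrite eqE => /andP[-> /forall_inP Xk]; split=> // w /Xk/eqP.
by apply/eqP; rewrite eqE Xc; apply/forall_inP => w /Xk ->.
Qed.

Definition deficient : {set V} :=
  [set w | (w != u) && (w != v) && (indeg hd w < k)].

Definition unreachable : {set V} :=
  [set w | ~~ reachable_from tl hd deficient w].

Lemma block_sub_unreachable (X : {set V}) :
  u \in X -> v \in X -> block tl hd k l X -> X \subset unreachable.
Proof.
move=> uX vX /(blockE uX vX)[Xc Xk]; apply/subsetP => w wX.
rewrite inE; apply/existsP => -[s /andP[sS s_w]].
have sX := in_closed_connect Xc s_w wX.
by move: sS; rewrite inE => /andP[/andP[su sv]]; rewrite Xk ?ltnn // !inE su sv.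
Qed.

Lemma unreachable_block :
  u \in unreachable -> v \in unreachable -> block tl hd k l unreachable.
Proof.
move=> uT vT; apply/(blockE uT vT); split; first exact: in_closed_unreachable.
move=> w; rewrite !inE => /and3P[wv wu /existsP wT].
apply/eqP; rewrite eqn_leq indeg_le leqNgt; apply: contra_notN wT => lt_k.
by exists w; rewrite connect0 !inE wu wv lt_k.
Qed.

End BlocksThroughUV.

Theorem lemma4 (k l : nat) (V E : finType) (tl hd : E -> V) (u v : V) :
  l < 2 * k ->
  loopless tl hd ->
  sparse tl hd k l ->
  (forall w : V, indeg hd w <= k) ->
  u != v ->
  indeg hd u + indeg hd v = 2 * k - l ->
  let Sset := [set w : V | (w != u) && (w != v) && (indeg hd w < k)] in
  let Tset := [set w : V | ~~ reachable_from tl hd Sset w] in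
  ((exists C : {set V}, component tl hd k l C /\ u \in C /\ v \in C)
     <-> (u \in Tset /\ v \in Tset)) /\
  (forall C : {set V}, component tl hd k l C -> u \in C -> v \in C -> C = Tset).
Proof.
move=> l_lt_2k _ _ indeg_le u_neq_v indeg_uv Sset Tset.
have subT (C : {set V}) : u \in C -> v \in C -> block tl hd k l C -> C \subset Tset.
  exact: block_sub_unreachable.
have blockT : u \in Tset -> v \in Tset -> block tl hd k l Tset.
  exact: unreachable_block.
split; first split.
- case=> C [[bC _] [uC vC]]; have /subsetP CT := subT C uC vC bC.
  by split; apply: CT.
- case=> uT vT; exists Tset; split=> //; split; first exact: blockT.
  move=> Y bY TY; have /subsetP TY' := TY.
  by apply/eqP; rewrite eqEsubset TY andbT subT ?TY'.
- move=> C [bC maxC] uC vC; have /subsetP CT := subT C uC vC bC.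
  by apply/esym/maxC; [apply: blockT; apply: CT | apply: subT].
Qed.
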